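(* Let $R$ be a set, $\mathcal{G}:(\mathbf{1},R)\rightarrow(Y,R)$ an object of $\mathrm{2Open}_R$, and $\mathcal{H}$ an $F_\mathcal{G}$-coalgebra with coalgebra map $(\langle\mathrm{now}_\mathcal{H},\mathrm{ltr}_\mathcal{H}\rangle,\langle\mathrm{hd}_\mathcal{H},\mathrm{tl}_\mathcal{H}\rangle):\mathcal{H}\rightarrow F_\mathcal{G}\mathcal{H}$, and let $\mathrm{unf}_Y:Y_\mathcal{H}\rightarrow Y^\omega$ be the unique function with $\mathrm{unf}_Y(z)=\mathrm{hd}_\mathcal{H}(z)\mathrel{::}\mathrm{unf}_Y(\mathrm{tl}_\mathcal{H}(z))$. Let $k:Y^\omega\rightarrow R$ and $\sigma'\in\Sigma_\mathcal{H}$ with $\sigma'\in E_\mathcal{H}(k\circ\mathrm{unf}_Y)$. Then (i) $\mathrm{now}_\mathcal{H}(\sigma')\in E_\mathcal{G}\big(\lambda y.\,k(y\mathrel{::}\mathrm{unf}_Y(P_\mathcal{H}(\mathrm{ltr}_\mathcal{H}(\sigma')(y))))\big)$, and (ii) for all $y'\in Y$, $\mathrm{ltr}_\mathcal{H}(\sigma')(y')\in E_\mathcal{H}\big(\lambda z.\,k(y'\mathrel{::}\mathrm{unf}_Y(z))\big)$.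
   Context: Fix a set $R$. Objects of $\mathrm{2Open}_R$ are open games $\mathcal{H}:(\mathbf{1},R)\rightarrow(Y_\mathcal{H},R)$ given by a strategy set $\Sigma_\mathcal{H}$, a move set $Y_\mathcal{H}$, a play function $P_\mathcal{H}:\Sigma_\mathcal{H}\rightarrow Y_\mathcal{H}$, an equilibrium function $E_\mathcal{H}:(Y_\mathcal{H}\rightarrow R)\rightarrow\mathcal{P}\Sigma_\mathcal{H}$, and identity coutility $C\,\sigma\,r=r$. A morphism $\beta:\mathcal{H}\rightarrow\mathcal{H}'$ is a pair $\beta_Y:Y_\mathcal{H}\rightarrow Y_{\mathcal{H}'}$, $\beta_\Sigma:\Sigma_\mathcal{H}\rightarrow\Sigma_{\mathcal{H}'}$ with $\beta_Y(P_\mathcal{H}\sigma)=P_{\mathcal{H}'}(\beta_\Sigma\sigma)$ for all $\sigma$, and such that for all $\sigma\in\Sigma_\mathcal{H}$ and $k:Y_{\mathcal{H}'}\rightarrow R$, $\sigma\in E_\mathcal{H}(k\circ\beta_Y)$ implies $\beta_\Sigma(\sigma)\in E_{\mathcal{H}'}(k)$. For the fixed $\mathcal{G}$ (data $\Sigma_\mathcal{G},Y,P_\mathcal{G},E_\mathcal{G}$) and any object $\mathcal{H}$, $F_\mathcal{G}\mathcal{H}$ is the game with strategies $\Sigma_\mathcal{G}\times(Y\rightarrow\Sigma_\mathcal{H})$, moves $Y\times Y_\mathcal{H}$, play $P(\sigma,f)=(P_\mathcal{G}\sigma,P_\mathcal{H}(f(P_\mathcal{G}\sigma)))$, identity coutility,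 and $(\sigma,f)\in E_{F_\mathcal{G}\mathcal{H}}(k)$ iff $\sigma\in E_\mathcal{G}(\lambda y.\,k(y,P_\mathcal{H}(f\,y)))$ and $f(y')\in E_\mathcal{H}(\lambda z.\,k(y',z))$ for all $y'\in Y$. An $F_\mathcal{G}$-coalgebra is an object $\mathcal{H}$ with a morphism $\mathcal{H}\rightarrow F_\mathcal{G}\mathcal{H}$; its strategy component is written $\langle\mathrm{now}_\mathcal{H},\mathrm{ltr}_\mathcal{H}\rangle:\Sigma_\mathcal{H}\rightarrow\Sigma_\mathcal{G}\times(Y\rightarrow\Sigma_\mathcal{H})$ and its move component $\langle\mathrm{hd}_\mathcal{H},\mathrm{tl}_\mathcal{H}\rangle:Y_\mathcal{H}\rightarrow Y\times Y_\mathcal{H}$. $Y^\omega$ denotes the set of infinite streams over $Y$ and $y\mathrel{::}w$ prepending $y$ to a stream. *)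

Set Implicit Arguments.

(* Objects of 2Open_R: open games (1,R) -> (Y_H,R) with identity coutility.
   The coutility is always the identity, so it is not stored.
   The equilibrium function E : (Y -> R) -> P(Sigma) is a predicate. *)
Record game (R : Type) := Game {
  strat : Type;
  moves : Type;
  play  : strat -> moves;
  equil : (moves -> R) -> strat -> Prop
}.
Arguments strat {R} g.
Arguments moves {R} g.
Arguments play {R} g _.
Arguments equil {R} g _ _.

Record morph (R : Type) (G H : game R) := Morph {
  mY : moves G -> moves H;
  mS : strat G -> strat H;
  mplay : forall s, mY (play G s) = play H (mS s);
  meq : forall (s : strat G) (k : moves H -> R),
      equil G (fun y => k (mY y)) s -> equil H k (mS s)
}.
Arguments mY {R G H} m _.
Arguments mS {R G H} m _.

Definition FG (R : Type) (G H : game R) : game R :=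
  {| strat := (strat G * (moves G -> strat H))%type;
     moves := (moves G * moves H)%type;
     play := fun p => (play G (fst p), play H (snd p (play G (fst p))));
     equil := fun k p =>
       equil G (fun y => k (y, play H (snd p y))) (fst p) /\
       (forall y' : moves G, equil H (fun z => k (y', z)) (snd p y')) |}.

Definition now_ (R : Type) (G H : game R) (c : morph H (FG G H)) (s : strat H)
  : strat G := fst (mS c s).
Definition ltr_ (R : Type) (G H : game R) (c : morph H (FG G H)) (s : strat H)
  : moves G -> strat H := snd (mS c s).
Definition hd_ (R : Type) (G H : game R) (c : morph H (FG G H)) (z : moves H)
  : moves G := fst (mY c z).
Definition tl_ (R : Type) (G H : game R) (c : morph H (FG G H)) (z : moves H)
  : moves H := snd (mY c z).

Definition stream (Y : Type) := nat -> Y.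
Definition scons (Y : Type) (y : Y) (w : stream Y) : stream Y :=
  fun n => match n with 0 => y | S m => w m end.

(* Since unf z = hd z :: unf (tl z), the continuation k o unf factors through the
   move component of the coalgebra map; its equilibrium condition then carries
   s' to an equilibrium of F_G H, which is exactly the pair of claims. *)
From Stdlib Require Import FunctionalExtensionality.

Lemma meq_ext {R : Type} {G H : game R} (m : morph G H)
  (kH : moves H -> R) (kG : moves G -> R) (s : strat G) :
  (forall y, kG y = kH (mY m y)) -> equil G kG s -> equil H kH (mS m s).
Proof.
  intros Hk Hs.
  apply meq.
  replace (fun y => kH (mY m y)) with kG by (apply functional_extensionality; exact Hk).
  exact Hs.
Qed.

Theorem lemma14 (R : Type) (G H : game R) (c : morph H (FG G H))
  (unf : moves H -> stream (moves G))
  (Hunf : forall z : moves H, unf z = scons (hd_ c z) (unf (tl_ c z)))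
  (k : stream (moves G) -> R) (s' : strat H)
  (hs : equil H (fun z => k (unf z)) s') :
  equil G (fun y => k (scons y (unf (play H (ltr_ c s' y))))) (now_ c s') /\
  (forall y' : moves G, equil H (fun z => k (scons y' (unf z))) (ltr_ c s' y')).
Proof.
  apply (meq_ext c (fun p => k (scons (fst p) (unf (snd p))))) in hs.
  - exact hs.
  - intro z. exact (f_equal k (Hunf z)).
Qed.
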